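(* Let $F$ and $G$ be BISO channels with output alphabet $\{-1,0,1\}$ (i.e. $l=1$) such that $\eta_{KL}(F)=\eta_{KL}(G)$. Then $F\succeq_{\mathrm{l.n.}}G$ or $G\succeq_{\mathrm{l.n.}}F$.
   Context: A binary-input symmetric-output (BISO) channel is a channel $P_{Y|X}$ with input alphabet $\{0,1\}$ and finite output alphabet $\mathcal Y=\{0,\pm1,\dots,\pm l\}$ for some integer $l\ge 1$ (some transition probabilities may be zero), such that $P_{Y|X}(y|0)=P_{Y|X}(-y|1)=:p_y$ for all $y\in\mathcal Y$. The KL contraction coefficient is $\eta_{KL}(P)=\sup_{P_X,Q_X}\frac{D(P\circ P_X\|P\circ Q_X)}{D(P_X\|Q_X)}$ (supremum over input distributions with $0<D(P_X\|Q_X)<\infty$, $P\circ P_X$ the output distribution). For channels $P_{Y|X},Q_{Y'|X}$ with the same input alphabet, $P\succeq_{\mathrm{l.n.}}Q$ (less noisy) means: for every finite-alphabet random variable $U$ and every joint distribution $P_{UX}$, with $U-X-Y$ and $U-X-Y'$ Markov chains, $I(U:Y)\ge I(U:Y')$. *)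

From HB Require Import structures.
From mathcomp Require Import all_boot all_order all_algebra.
From mathcomp Require Import all_classical all_reals exp.
Set Implicit Arguments. Unset Strict Implicit. Unset Printing Implicit Defensive.
Import Order.TTheory GRing.Theory Num.Theory.
Local Open Scope ring_scope.
Local Open Scope classical_set_scope.

Section Info.
Variable R : realType.

Definition is_dist (T : finType) (p : T -> R) : Prop :=
  (forall t, 0 <= p t) /\ \sum_(t : T) p t = 1.

Definition is_channel (X Y : finType) (W : X -> Y -> R) : Prop :=
  forall x, is_dist (W x).

Definition out_dist (X Y : finType) (W : X -> Y -> R) (p : X -> R) : Y -> R :=
  fun y => \sum_(x : X) p x * W x y.

(* KL divergence (natural log), convention 0 ln(0/q) = 0; only used when
   the support of p is contained in the support of q (finite case). *)
Definition KL (T : finType) (p q : T -> R) : R :=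
  \sum_(t : T) (if p t == 0 then 0 else p t * ln (p t / q t)).

(* D(p||q) < oo  iff  supp p is contained in supp q *)
Definition abs_cont (T : finType) (p q : T -> R) : Prop :=
  forall t, q t = 0 -> p t = 0.

Definition eta_KL (X Y : finType) (W : X -> Y -> R) : R :=
  sup [set r | exists (p q : X -> R), [/\ is_dist p, is_dist q, abs_cont p q,
          0 < KL p q & r = KL (out_dist W p) (out_dist W q) / KL p q]].

Definition mutual_info (U Y : finType) (pUY : U -> Y -> R) : R :=
  KL (fun uy : U * Y => pUY uy.1 uy.2)
     (fun uy : U * Y => (\sum_(y : Y) pUY uy.1 y) * (\sum_(u : U) pUY u uy.2)).

(* joint distribution of (U, Y) when U - X - Y, Y obtained from X through W *)
Definition joint_out (U X Y : finType) (pUX : U -> X -> R) (W : X -> Y -> R)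
  : U -> Y -> R := fun u y => \sum_(x : X) pUX u x * W x y.

Definition less_noisy (X Y Y' : finType) (W : X -> Y -> R) (V : X -> Y' -> R)
  : Prop :=
  forall (U : finType) (pUX : U -> X -> R),
    is_dist (fun ux : U * X => pUX ux.1 ux.2) ->
    mutual_info (joint_out pUX V) <= mutual_info (joint_out pUX W).

(* BISO channel with output alphabet {-1,0,1}, encoded as 'I_3 with
   index k standing for k - 1, so that y |-> -y is rev_ord;
   input alphabet {0,1} encoded as bool (false = 0, true = 1). *)
Definition BISO3 (W : bool -> 'I_3 -> R) : Prop :=
  is_channel W /\ forall y : 'I_3, W false y = W true (rev_ord y).

End Info.

(* For a binary-input channel W let Psi_W(x) = sum_y o_y ln o_y, where o is the
   output law for the input Bernoulli(x).  Then
   I(U;Y) = sum_u P(u) Psi_W(x_u) - Psi_W(sum_u P(u) x_u), so W is less noisy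
   than V as soon as Psi_W - Psi_V is convex (Jensen); and KL(Wp || Wq) is the
   Bregman divergence of Psi_W, so eta_KL(W) <= k as soon as k Psi_id - Psi_W
   is convex.  For a BISO channel on {-1,0,1} with p_1 = a and p_(-1) = b one
   computes Psi_W''(x) = eta / (1/4 - rho (x - 1/2)^2) with
   eta = (a-b)^2/(a+b) and rho = (a-b)^2/(a+b)^2 <= 1.  Comparing with the
   noiseless channel (eta = rho = 1) gives eta_KL(W) <= eta, and inputs near the
   uniform one show equality.  Two such channels with the same eta_KL are thus
   ordered by rho, the one with the larger rho being less noisy. *)

From mathcomp Require Import all_boot all_order all_algebra.
From mathcomp Require Import all_classical all_reals all_analysis.
From mathcomp Require Import ring lra.
Set Implicit Arguments. Unset Strict Implicit. Unset Printing Implicit Defensive.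
Import Order.TTheory GRing.Theory Num.Theory.
Import numFieldNormedType.Exports.
Local Open Scope ring_scope.
Local Open Scope classical_set_scope.

Section Convexity.
Variable R : realType.

Definition supporting_tangents (f df : R -> R) :=
  forall q p, 0 < q < 1 -> 0 <= p <= 1 -> f q + df q * (p - q) <= f p.

Lemma supporting_tangents_of_derive2 (f df d2f : R -> R) :
  {within `[0, 1], continuous f} ->
  (forall x : R, 0 < x < 1 -> is_derive x 1 f (df x)) ->
  (forall x : R, 0 < x < 1 -> is_derive x 1 df (d2f x)) ->
  (forall x : R, 0 < x < 1 -> 0 <= d2f x) -> supporting_tangents f df.
Proof.
move=> fc fd dfd d2f_ge0 q p /andP[q0 q1] /andP[p0 p1].
have in01 (x : R) : x \in `]0, 1[%R -> 0 < x < 1 by rewrite in_itv.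
have df_mono : {in `]0, 1[%R &, {homo df : x y / x <= y}}.
  apply: ger0_derive1_le_oo.
  - by move=> x /in01/dfd [].
  - by move=> x /in01 x01; rewrite derive1E (@derive_val _ _ _ _ _ _ _ (dfd x x01)) d2f_ge0.
  - move=> x; rewrite inE /= in_itv => x01; apply/differentiable_continuous/derivable1_diffP.
    by have [] := dfd x x01.
have fc_sub (a b : R) : 0 <= a -> b <= 1 -> {within `[a, b], continuous f}.
  by move=> a0 b1; apply: continuous_subspaceW fc; apply: subset_itvScc; rewrite bnd_simp.
have fd_sub (a b : R) : 0 <= a -> b <= 1 -> forall x : R, x \in `]a, b[%R -> is_derive x 1 f (df x).
  move=> a0 b1 x; rewrite in_itv => /andP[ax xb]; apply: fd.
  by rewrite (le_lt_trans a0 ax) (lt_le_trans xb b1).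
case: (ltgtP q p) => [qp|pq|<-]; last by rewrite subrr mulr0 addr0.
- have [c] := MVT qp (fd_sub q p (ltW q0) p1) (fc_sub q p (ltW q0) p1).
  rewrite in_itv => /andP[qc cp] fpq.
  have dfqc : df q <= df c.
    by apply: df_mono; rewrite ?in_itv /= ?q0 ?q1 ?(lt_trans q0 qc) ?(lt_le_trans cp p1) // ltW.
  by rewrite -lerBrDl fpq ler_wpM2r // subr_ge0 ltW.
- have [c] := MVT pq (fd_sub p q p0 (ltW q1)) (fc_sub p q p0 (ltW q1)).
  rewrite in_itv => /andP[pc cq] fqp.
  have dfcq : df c <= df q.
    by apply: df_mono; rewrite ?in_itv /= ?q0 ?q1 ?(le_lt_trans p0 pc) ?(lt_trans cq q1) // ltW.
  have : df c * (q - p) <= df q * (q - p) by rewrite ler_wpM2r // subr_ge0 ltW.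
  rewrite -fqp; lra.
Qed.

Lemma jensen_supporting_tangents (f df : R -> R) (U : finType) (w x : U -> R) :
  supporting_tangents f df -> (forall u, 0 <= w u) -> \sum_u w u = 1 ->
  (forall u, 0 <= x u <= 1) ->
  f (\sum_u w u * x u) <= \sum_u w u * f (x u).
Proof.
move=> tangent w0 w1 x01.
set m := \sum_u w u * x u.
have wx0 u : 0 <= w u * x u by rewrite mulr_ge0 //; case/andP: (x01 u).
have wx1 u : 0 <= w u * (1 - x u) by rewrite mulr_ge0 // subr_ge0; case/andP: (x01 u).
have sum_wx1 : \sum_u w u * (1 - x u) = 1 - m.
  rewrite (eq_bigr (fun u => w u - w u * x u)) ?sumrB ?w1 // => u _.
  by rewrite mulrBr mulr1.
have concentrated c : (forall u, w u * (x u - c) = 0) -> \sum_u w u * f (x u) = f c.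
  move=> wxc; rewrite -[RHS]mul1r -w1 mulr_suml; apply: eq_bigr => u _.
  by have /eqP := wxc u; rewrite mulf_eq0 subr_eq0 => /orP[/eqP->|/eqP->]; rewrite ?mul0r.
have [m0|m_neq0] := eqVneq m 0.
  rewrite m0 (concentrated 0) // => u; rewrite subr0.
  exact: (psumr_eq0P (fun u _ => wx0 u) m0).
have [m1|m_neq1] := eqVneq m 1.
  rewrite m1 (concentrated 1) // => u; apply/eqP; rewrite -oppr_eq0 -mulrN opprB; apply/eqP.
  by apply: (psumr_eq0P (P := predT) (fun u _ => wx1 u)) => //; rewrite sum_wx1 m1 subrr.
have m_gt0 : 0 < m by rewrite lt0r m_neq0 sumr_ge0.
have m_lt1 : m < 1.
  by rewrite lt_neqAle m_neq1 -subr_ge0 -sum_wx1; apply: sumr_ge0 => u _.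
have lin : \sum_u w u * (f m + df m * (x u - m)) = f m.
  rewrite (eq_bigr (fun u => f m * w u + df m * (w u * x u) - df m * m * w u));
    last by move=> u _; ring.
  by rewrite !sumrB big_split /= -!mulr_sumr w1 -/m; ring.
rewrite -[leLHS]lin; apply: ler_sum => u _; rewrite ler_wpM2l //.
by apply: tangent; rewrite ?m_gt0 ?m_lt1.
Qed.
End Convexity.

Section XlnxSums.
Variable R : realType.

Definition xlnx (x : R) := x * ln x.

Lemma xlnx0 : xlnx 0 = 0.
Proof. by rewrite /xlnx mul0r. Qed.

Lemma xlnxM (w z : R) : 0 <= w -> 0 <= z -> xlnx (w * z) = w * xlnx z + z * xlnx w.
Proof.
rewrite !le0r => /predU1P[->|w0] /predU1P[->|z0]; rewrite /xlnx;
  rewrite ?(mulr0, mul0r, addr0, add0r) //.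
by rewrite lnM ?posrE //; ring.
Qed.

Lemma is_derive_xlnx (y : R) : 0 < y -> is_derive y 1 xlnx (ln y + 1).
Proof.
move=> y0; apply: is_derive_eq (is_deriveM (is_derive_id y 1) (is_derive1_ln y0)) _.
by rewrite /GRing.scale /= mulr1 mulfV ?gt_eqF // addrC.
Qed.

Lemma Nsqrt_le_xlnx (y : R) : 0 < y -> - (2 * Num.sqrt y) <= xlnx y.
Proof.
move=> y0; set s := Num.sqrt y.
have s0 : 0 < s by rewrite sqrtr_gt0.
have ys : y = s * s by rewrite -expr2 sqr_sqrtr // ltW.
have lnV_lt : - ln s < s^-1 by rewrite -lnV ?posrE // ln_sublinear // invr_gt0.
have -> : xlnx y = 2 * (s * s) * ln s by rewrite /xlnx ys lnM ?posrE //; ring.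
have -> : 2 * s = 2 * (s * s) * s^-1 by field; rewrite gt_eqF.
rewrite -mulrN; apply: ler_wpM2l; first by rewrite mulr_ge0 // mulr_ge0 // ltW.
by rewrite lerNl ltW.
Qed.

Lemma continuous_xlnx : continuous xlnx.
Proof.
move=> x; case: (ltgtP x 0) => [xlt0|xgt0|->].
- apply/cvgrPdist_lt => e e0; near=> y.
  have y0 : y < 0 by near: y; exact: lt_nbhsl.
  by rewrite /xlnx !ln0 ?ltW // !mulr0 subrr normr0.
- exact: continuousM (@cvg_id _ _) (continuous_ln xgt0).
- apply/cvgrPdist_lt => e e0; near=> y.
  have ye : `|y| < Num.min 1 ((e / 2) ^+ 2).
    near: y; apply: (@nbhs0_lt _ R^o).
    by rewrite lt_min ltr01 exprn_gt0 // divr_gt0.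
  rewrite xlnx0 sub0r normrN.
  case: (lerP y 0) => [yle0|ygt0]; first by rewrite /xlnx ln0 // mulr0 normr0.
  move: ye; rewrite gtr0_norm // lt_min => /andP[y1 ye].
  have sqrt_lt : Num.sqrt y < e / 2.
    by rewrite -(@ltr_pXn2r _ 2) ?nnegrE ?sqrtr_ge0 ?divr_ge0 ?ltW // sqr_sqrtr // ltW.
  have xlnx_le0 : xlnx y <= 0 by rewrite /xlnx pmulr_rle0 // ln_le0 // ltW.
  have := Nsqrt_le_xlnx ygt0; rewrite ltr_norml; lra.
Unshelve. all: by end_near.
Qed.

Lemma is_derive_sum_seq (I : Type) (P : pred I) (s : seq I) (f : I -> R -> R)
    (df : I -> R) (x : R) :
  all P s -> (forall i, P i -> is_derive x 1 (f i) (df i)) ->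
  is_derive x 1 (fun y : R => \sum_(i <- s) f i y) (\sum_(i <- s) df i).
Proof.
move=> Ps fdf; elim: s Ps => [_|i s IHs /andP[Pi Ps]].
  rewrite big_nil; under eq_fun do rewrite big_nil; exact: is_derive_cst.
rewrite big_cons; under eq_fun do rewrite big_cons.
exact: is_deriveD (fdf i Pi) (IHs Ps).
Qed.

Lemma continuous_sum_seq (I : Type) (s : seq I) (f : I -> R -> R) :
  (forall i, continuous (f i)) -> continuous (fun y : R => \sum_(i <- s) f i y).
Proof.
move=> fc; elim: s => [|i s IHs].
  under eq_fun do rewrite big_nil; exact: cst_continuous.
under eq_fun do rewrite big_cons; move=> x; exact: continuousD (fc i x) (IHs x).
Qed.

Lemma is_derive_affine (b g x : R) : is_derive x 1 (fun y => b + g * y) g.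
Proof.
apply: is_derive_eq (is_deriveD (is_derive_cst b x 1) (is_deriveZ g (is_derive_id x 1))) _.
by rewrite /GRing.scale /= add0r mulr1.
Qed.

(* A triple [((alpha, beta), gamma)] codes the function
   [x |-> alpha * xlnx (beta + gamma * x)]; [xlnx_sum] adds up such terms. *)
Definition xlnx_sum (L : seq (R * R * R)) (x : R) :=
  \sum_(t <- L) t.1.1 * xlnx (t.1.2 + t.2 * x).
Definition xlnx_sum_d1 (L : seq (R * R * R)) (x : R) :=
  \sum_(t <- L) t.1.1 * (t.2 * (ln (t.1.2 + t.2 * x) + 1)).
Definition xlnx_sum_d2 (L : seq (R * R * R)) (x : R) :=
  \sum_(t <- L) t.1.1 * t.2 ^+ 2 / (t.1.2 + t.2 * x).

Definition nonneg01_term (t : R * R * R) := (0 <= t.1.2) && (0 <= t.1.2 + t.2).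
Definition nonneg01 (L : seq (R * R * R)) := all nonneg01_term L.

Lemma affine01_gt0_or_eq0 (b g x : R) : 0 <= b -> 0 <= b + g -> 0 < x < 1 ->
  0 < b + g * x \/ b = 0 /\ g = 0.
Proof.
move=> b0 bg0 /andP[x0 x1].
have -> : b + g * x = (1 - x) * b + x * (b + g) by ring.
have [b_gt0|] := ltrP 0 b.
  have : 0 < (1 - x) * b by rewrite mulr_gt0 // subr_gt0.
  have : 0 <= x * (b + g) by rewrite mulr_ge0 // ltW.
  by left; lra.
have [bg_gt0|] := ltrP 0 (b + g).
  have : 0 <= (1 - x) * b by rewrite mulr_ge0 // subr_ge0 ltW.
  have : 0 < x * (b + g) by rewrite mulr_gt0.
  by left; lra.
by move=> bg_le0 b_le0; right; lra.
Qed.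

Lemma is_derive_xlnx_term (t : R * R * R) (x : R) : nonneg01_term t -> 0 < x < 1 ->
  is_derive x 1 (fun y => t.1.1 * xlnx (t.1.2 + t.2 * y))
    (t.1.1 * (t.2 * (ln (t.1.2 + t.2 * x) + 1))).
Proof.
case: t => [[a b] g] /andP[/= b0 bg0] x01 /=.
have [pos|[-> ->]] := affine01_gt0_or_eq0 b0 bg0 x01; last first.
  under eq_fun do rewrite mul0r addr0 xlnx0 mulr0.
  by rewrite mul0r mulr0; exact: is_derive_cst.
have affine := is_derive_affine b g x.
have -> : (fun y => a * xlnx (b + g * y)) = a \*: (xlnx \o (fun y => b + g * y)) by [].
have -> : a * (g * (ln (b + g * x) + 1)) = a *: ((ln (b + g * x) + 1) * g).
  by rewrite /GRing.scale /= (mulrC g).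
exact: is_deriveZ (@is_derive1_comp R xlnx _ x _ _ (is_derive_xlnx pos) affine).
Qed.

Lemma is_derive_xlnx_term_d1 (t : R * R * R) (x : R) : nonneg01_term t -> 0 < x < 1 ->
  is_derive x 1 (fun y => t.1.1 * (t.2 * (ln (t.1.2 + t.2 * y) + 1)))
    (t.1.1 * t.2 ^+ 2 / (t.1.2 + t.2 * x)).
Proof.
case: t => [[a b] g] /andP[/= b0 bg0] x01 /=.
have [pos|[-> ->]] := affine01_gt0_or_eq0 b0 bg0 x01; last first.
  under eq_fun do rewrite mul0r mulr0.
  by rewrite expr0n mulr0 mul0r; exact: is_derive_cst.
have affine := is_derive_affine b g x.
have -> : (fun y => a * (g * (ln (b + g * y) + 1))) =
    (a * g) \*: ((@ln R \o (fun y => b + g * y)) + cst 1).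
  by apply/funext => y /=; rewrite /GRing.scale /= mulrA.
have h1 := @is_derive1_comp R (@ln R) (fun y => b + g * y) x _ _ (is_derive1_ln pos) affine.
apply: is_derive_eq (is_deriveZ (a * g) (is_deriveD h1 (@is_derive_cst R R R^o 1 x 1))) _.
by rewrite /GRing.scale /= addr0 expr2; field; rewrite gt_eqF.
Qed.

Lemma is_derive_xlnx_sum (L : seq (R * R * R)) (x : R) : nonneg01 L -> 0 < x < 1 ->
  is_derive x 1 (xlnx_sum L) (xlnx_sum_d1 L x).
Proof.
by move=> L01 x01; apply: (is_derive_sum_seq L01) => t t01; exact: is_derive_xlnx_term.
Qed.

Lemma is_derive_xlnx_sum_d1 (L : seq (R * R * R)) (x : R) : nonneg01 L -> 0 < x < 1 ->
  is_derive x 1 (xlnx_sum_d1 L) (xlnx_sum_d2 L x).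
Proof.
move=> L01 x01; apply: (is_derive_sum_seq L01) => t t01.
exact: is_derive_xlnx_term_d1.
Qed.

Lemma continuous_xlnx_term (a b g : R) : continuous (fun y : R => a * xlnx (b + g * y)).
Proof.
move=> x; apply: (@continuousM _ _ (cst a) (fun y => xlnx (b + g * y))).
  exact: cst_continuous.
apply: continuous_comp; last exact: continuous_xlnx.
apply/differentiable_continuous/derivable1_diffP.
by have [] := is_derive_affine b g x.
Qed.

Lemma continuous_xlnx_sum (L : seq (R * R * R)) : continuous (xlnx_sum L).
Proof. by apply: continuous_sum_seq => t; exact: continuous_xlnx_term. Qed.

Lemma supporting_tangents_xlnx_sum (L : seq (R * R * R)) : nonneg01 L ->
  (forall x, 0 < x < 1 -> 0 <= xlnx_sum_d2 L x) ->
  supporting_tangents (xlnx_sum L) (xlnx_sum_d1 L).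
Proof.
move=> L01 d2_ge0; apply: supporting_tangents_of_derive2 d2_ge0.
- exact/continuous_subspaceT/continuous_xlnx_sum.
- by move=> x; exact: is_derive_xlnx_sum.
- by move=> x; exact: is_derive_xlnx_sum_d1.
Qed.

Definition scale_terms (c : R) (L : seq (R * R * R)) :=
  [seq (c * t.1.1, t.1.2, t.2) | t <- L].

Lemma nonneg01_scale c L : nonneg01 (scale_terms c L) = nonneg01 L.
Proof. by rewrite /nonneg01 all_map. Qed.

Lemma xlnx_sum_scale c L x : xlnx_sum (scale_terms c L) x = c * xlnx_sum L x.
Proof. by rewrite /xlnx_sum big_map mulr_sumr; apply: eq_bigr => t _; rewrite !mulrA. Qed.

Lemma xlnx_sum_d1_scale c L x : xlnx_sum_d1 (scale_terms c L) x = c * xlnx_sum_d1 L x.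
Proof. by rewrite /xlnx_sum_d1 big_map mulr_sumr; apply: eq_bigr => t _; rewrite !mulrA. Qed.

Lemma xlnx_sum_d2_scale c L x : xlnx_sum_d2 (scale_terms c L) x = c * xlnx_sum_d2 L x.
Proof. by rewrite /xlnx_sum_d2 big_map mulr_sumr; apply: eq_bigr => t _; rewrite !mulrA. Qed.

Lemma xlnx_sum_cat L L' x : xlnx_sum (L ++ L') x = xlnx_sum L x + xlnx_sum L' x.
Proof. by rewrite /xlnx_sum big_cat. Qed.

Lemma xlnx_sum_d1_cat L L' x : xlnx_sum_d1 (L ++ L') x = xlnx_sum_d1 L x + xlnx_sum_d1 L' x.
Proof. by rewrite /xlnx_sum_d1 big_cat. Qed.

Lemma xlnx_sum_d2_cat L L' x : xlnx_sum_d2 (L ++ L') x = xlnx_sum_d2 L x + xlnx_sum_d2 L' x.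
Proof. by rewrite /xlnx_sum_d2 big_cat. Qed.

Lemma supporting_tangents_xlnx_sum_sub (L1 L2 : seq (R * R * R)) :
  nonneg01 L1 -> nonneg01 L2 ->
  (forall x, 0 < x < 1 -> xlnx_sum_d2 L2 x <= xlnx_sum_d2 L1 x) ->
  supporting_tangents (fun x => xlnx_sum L1 x - xlnx_sum L2 x)
                      (fun x => xlnx_sum_d1 L1 x - xlnx_sum_d1 L2 x).
Proof.
move=> L1_01 L2_01 d2_le; set L := L1 ++ scale_terms (-1) L2.
have -> : (fun x => xlnx_sum L1 x - xlnx_sum L2 x) = xlnx_sum L.
  by apply/funext => x; rewrite xlnx_sum_cat xlnx_sum_scale mulN1r.
have -> : (fun x => xlnx_sum_d1 L1 x - xlnx_sum_d1 L2 x) = xlnx_sum_d1 L.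
  by apply/funext => x; rewrite xlnx_sum_d1_cat xlnx_sum_d1_scale mulN1r.
apply: supporting_tangents_xlnx_sum => [|x x01].
  by rewrite /L /nonneg01 all_cat -!/(nonneg01 _) nonneg01_scale L1_01.
by rewrite xlnx_sum_d2_cat xlnx_sum_d2_scale mulN1r subr_ge0 d2_le.
Qed.
End XlnxSums.

Section BinaryInput.
Variable R : realType.

Lemma KL_summandE (x y : R) : 0 <= x -> (0 < x -> 0 < y) ->
  (if x == 0 then 0 else x * ln (x / y)) = xlnx x - x * ln y.
Proof.
rewrite le0r => /predU1P[->|x0] y0; first by rewrite eqxx xlnx0 mul0r subr0.
by rewrite gt_eqF // ln_div ?posrE ?y0 // mulrBr.
Qed.

Lemma out_dist_ge0 (X Y : finType) (W : X -> Y -> R) p y :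
  is_channel W -> is_dist p -> 0 <= out_dist W p y.
Proof.
move=> hW [p0 _]; apply: sumr_ge0 => x _.
by rewrite mulr_ge0 //; case: (hW x).
Qed.

Lemma out_dist_sum1 (X Y : finType) (W : X -> Y -> R) p :
  is_channel W -> is_dist p -> \sum_y out_dist W p y = 1.
Proof.
move=> hW [_ p1]; rewrite /out_dist exchange_big /= -[RHS]p1.
by apply: eq_bigr => x _; rewrite -mulr_sumr; case: (hW x) => _ ->; rewrite mulr1.
Qed.

Definition bern (x : R) : bool -> R := fun i => if i then x else 1 - x.

Lemma bern_dist x : 0 <= x <= 1 -> is_dist (bern x).
Proof.
move=> /andP[x0 x1]; split => [[]|]; rewrite /bern ?subr_ge0 //.
by rewrite big_bool /= addrC subrK.
Qed.

Lemma dist_boolE (p : bool -> R) : is_dist p -> p = bern (p true) /\ 0 <= p true <= 1.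
Proof.
case=> p0 p1; rewrite big_bool /= in p1.
have pf : p false = 1 - p true by rewrite -p1 addrC addrK.
split; first by apply/funext => -[]; rewrite /bern.
by rewrite p0 /= -subr_ge0 -pf.
Qed.

Definition noiseless : bool -> bool -> R := fun i j => (i == j)%:R.

Lemma noiseless_channel : is_channel noiseless.
Proof.
move=> i; split => [j|]; first exact: ler0n.
by rewrite big_bool /noiseless; case: i; rewrite /= ?addr0 ?add0r.
Qed.

Lemma out_dist_noiseless p : out_dist noiseless p = p.
Proof.
apply/funext => j; rewrite /out_dist big_bool /noiseless.
by case: j => /=; rewrite ?mulr1 ?mulr0 ?addr0 ?add0r.
Qed.

Section Channel.
Variables (Y : finType) (W : bool -> Y -> R).
Hypothesis hW : is_channel W.

(* Codes Psi_W: output [y] has probability [W false y + (W true y - W false y) * x]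
   under the input law [bern x]. *)
Definition out_terms : seq (R * R * R) :=
  [seq (1, W false y, W true y - W false y) | y <- enum Y].

Lemma out_dist_bern x y : out_dist W (bern x) y = W false y + (W true y - W false y) * x.
Proof. by rewrite /out_dist big_bool /bern /=; ring. Qed.

Lemma nonneg01_out_terms : nonneg01 out_terms.
Proof.
rewrite /nonneg01 all_map; apply/allP => y _ /=.
have W0 : 0 <= W false y by case: (hW false).
have W1 : 0 <= W true y by case: (hW true).
by rewrite /nonneg01_term /= W0 addrC subrK W1.
Qed.

Lemma xlnx_sum_out_terms x : xlnx_sum out_terms x = \sum_y xlnx (out_dist W (bern x) y).
Proof.
by rewrite /xlnx_sum big_map big_enum; apply: eq_bigr => y _; rewrite mul1r out_dist_bern.
Qed.

Lemma xlnx_sum_d1_out_terms x : xlnx_sum_d1 out_terms x =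
  \sum_y (W true y - W false y) * (ln (out_dist W (bern x) y) + 1).
Proof.
by rewrite /xlnx_sum_d1 big_map big_enum; apply: eq_bigr => y _; rewrite mul1r out_dist_bern.
Qed.

Lemma xlnx_sum_d2_out_terms x : xlnx_sum_d2 out_terms x =
  \sum_y (W true y - W false y) ^+ 2 / out_dist W (bern x) y.
Proof.
by rewrite /xlnx_sum_d2 big_map big_enum; apply: eq_bigr => y _; rewrite mul1r out_dist_bern.
Qed.

(* KL between outputs is the Bregman divergence of Psi_W. *)
Lemma KL_out_bern s x : 0 < s < 1 -> 0 <= x <= 1 ->
  KL (out_dist W (bern x)) (out_dist W (bern s)) =
  xlnx_sum out_terms x - xlnx_sum out_terms s - xlnx_sum_d1 out_terms s * (x - s).
Proof.
move=> s01 x01; have s01' : 0 <= s <= 1 by case/andP: s01 => s0 s1; rewrite !ltW.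
have supp y : 0 < out_dist W (bern x) y -> 0 < out_dist W (bern s) y.
  rewrite !out_dist_bern.
  have W0 : 0 <= W false y by case: (hW false).
  have W1 : 0 <= W false y + (W true y - W false y) by rewrite addrC subrK; case: (hW true).
  by have [//|[-> ->]] := affine01_gt0_or_eq0 W0 W1 s01; rewrite mul0r addr0 ltxx.
have mass : \sum_y out_dist W (bern s) y - \sum_y out_dist W (bern x) y = 0.
  by rewrite !out_dist_sum1 ?subrr //; exact: bern_dist.
rewrite xlnx_sum_out_terms xlnx_sum_out_terms xlnx_sum_d1_out_terms.
rewrite -[LHS]addr0 -{1}mass /KL.
under eq_bigr => y _ do rewrite (KL_summandE (out_dist_ge0 y hW (bern_dist x01)) (supp y)).
rewrite -sumrB -big_split mulr_suml -!sumrB; apply: eq_bigr => y _.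
by rewrite !out_dist_bern /xlnx /=; ring.
Qed.
End Channel.

Lemma KL_summand_same (x : R) : (if x == 0 then 0 else x * ln (x / x)) = 0.
Proof. by case: ifPn => // x0; rewrite divff // ln1 mulr0. Qed.

Lemma KL_same (T : finType) (p : T -> R) : KL p p = 0.
Proof. by rewrite /KL big1 // => t _; rewrite KL_summand_same. Qed.

Lemma KL_pos_bool_interior (p q : bool -> R) : is_dist p -> is_dist q -> abs_cont p q ->
  0 < KL p q -> 0 < q true < 1.
Proof.
move=> hp hq hac; have [pE /andP[p0 p1]] := dist_boolE hp.
have [qE /andP[q0 q1]] := dist_boolE hq.
have same : p true = q true -> KL p q = 0 by move=> e; rewrite pE qE e KL_same.
apply: contraTT; rewrite negb_and -!leNgt => /orP[qle0|qge1].
- have q_0 : q true = 0 by apply/eqP; rewrite eq_le qle0 q0.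
  by rewrite same ?ltxx // q_0 hac.
- have q_1 : q true = 1 by apply/eqP; rewrite eq_le q1 qge1.
  have qf0 : q false = 0 by rewrite qE /bern q_1 subrr.
  have pf0 := hac false qf0.
  by rewrite same ?ltxx // q_1; move: pf0; rewrite pE /bern => /eqP; rewrite subr_eq0 => /eqP.
Qed.

Definition KL_contraction_bound (X Y : finType) (W : X -> Y -> R) (k : R) :=
  forall p q, is_dist p -> is_dist q -> abs_cont p q -> 0 < KL p q ->
    KL (out_dist W p) (out_dist W q) <= k * KL p q.

Lemma eta_KL_le (X Y : finType) (W : X -> Y -> R) k :
  0 <= k -> KL_contraction_bound W k -> eta_KL W <= k.
Proof.
move=> k0 bound; rewrite /eta_KL; set S := [set r | _].
case: (pselect (S !=set0)) => [neS|S0]; last first.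
  rewrite (_ : S = set0) ?sup0 //; apply/funext => r; apply/propext.
  by split => // Sr; apply: S0; exists r.
by apply: ge_sup neS _ => r [p [q [hp hq hac hKL ->]]]; rewrite ler_pdivrMr // bound.
Qed.

Lemma KL_ratio_le_eta_KL (X Y : finType) (W : X -> Y -> R) k p q :
  KL_contraction_bound W k -> is_dist p -> is_dist q -> abs_cont p q -> 0 < KL p q ->
  KL (out_dist W p) (out_dist W q) / KL p q <= eta_KL W.
Proof.
move=> bound hp hq hac hKL; apply: sup_upper_bound; last by exists p, q.
split; first by exists (KL (out_dist W p) (out_dist W q) / KL p q), p, q.
by exists k => r [p' [q' [hp' hq' hac' hKL' ->]]]; rewrite ler_pdivrMr // bound.
Qed.

Lemma KL_contraction_bound_of_d2 (Y : finType) (W : bool -> Y -> R) k : is_channel W ->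
  (forall x, 0 < x < 1 ->
     xlnx_sum_d2 (out_terms W) x <= k * xlnx_sum_d2 (out_terms noiseless) x) ->
  KL_contraction_bound W k.
Proof.
move=> hW d2_le p q hp hq hac hKL.
have s01 := KL_pos_bool_interior hp hq hac hKL.
have [pE x01] := dist_boolE hp; have [qE _] := dist_boolE hq.
have Lk01 : nonneg01 (scale_terms k (out_terms noiseless)).
  by rewrite nonneg01_scale; exact: nonneg01_out_terms noiseless_channel.
have d2_le' x : 0 < x < 1 ->
    xlnx_sum_d2 (out_terms W) x <= xlnx_sum_d2 (scale_terms k (out_terms noiseless)) x.
  by move=> x01'; rewrite xlnx_sum_d2_scale d2_le.
have := supporting_tangents_xlnx_sum_sub Lk01 (nonneg01_out_terms hW) d2_le' s01 x01.
rewrite !xlnx_sum_scale xlnx_sum_d1_scale => tangent.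
rewrite pE qE -[X in _ <= k * KL X _]out_dist_noiseless.
rewrite -[X in _ <= k * KL _ X]out_dist_noiseless.
rewrite !KL_out_bern //; last exact: noiseless_channel.
by move: tangent; nra.
Qed.
End BinaryInput.
Arguments noiseless {R}.

Section MutualInformation.
Variable R : realType.

Lemma ler_term_sum (I : finType) (F : I -> R) i : (forall j, 0 <= F j) -> F i <= \sum_j F j.
Proof. by move=> F0; rewrite (bigD1 i) //= lerDl sumr_ge0. Qed.

Section Decomposition.
Variables (Y U : finType) (W : bool -> Y -> R) (pUX : U -> bool -> R).
Hypotheses (hW : is_channel W) (hd : is_dist (fun ux : U * bool => pUX ux.1 ux.2)).

Let w u := pUX u false + pUX u true.
Let P := joint_out pUX W.

Lemma joint_ge0 u x : 0 <= pUX u x.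
Proof. by case: hd => p0 _; exact: (p0 (u, x)). Qed.

Lemma weight_ge0 u : 0 <= w u.
Proof. by rewrite addr_ge0 ?joint_ge0. Qed.

Lemma weight_sum1 : \sum_u w u = 1.
Proof.
case: hd => _; rewrite -(pair_bigA _ (fun u x => pUX u x)) /= => <-.
by apply: eq_bigr => u _; rewrite big_bool /w addrC.
Qed.

Lemma cond01 u : 0 <= pUX u true / w u <= 1.
Proof.
rewrite divr_ge0 ?joint_ge0 ?weight_ge0 //=.
have [->|w_neq0] := eqVneq (w u) 0; first by rewrite invr0 mulr0 ler01.
by rewrite ler_pdivrMr ?lt0r ?w_neq0 ?weight_ge0 // mul1r lerDr joint_ge0.
Qed.

Lemma weighted_cond u : w u * (pUX u true / w u) = pUX u true.
Proof.
have [w0|w_neq0] := eqVneq (w u) 0; last by rewrite mulrC divfK.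
have : pUX u true = 0 by move: w0 (joint_ge0 u false) (joint_ge0 u true); rewrite /w; lra.
by move=> ->; rewrite mul0r mulr0.
Qed.

Lemma joint_out_cond u y : P u y = w u * out_dist W (bern (pUX u true / w u)) y.
Proof.
rewrite /P /joint_out big_bool /= out_dist_bern mulrDr mulrCA weighted_cond.
by rewrite /w; ring.
Qed.

Lemma joint_out_row u : \sum_y P u y = w u.
Proof.
under eq_bigr do rewrite joint_out_cond.
by rewrite -mulr_sumr out_dist_sum1 ?mulr1 //; exact: bern_dist (cond01 u).
Qed.

Lemma joint_out_col y : \sum_u P u y = out_dist W (bern (\sum_u pUX u true)) y.
Proof.
have pUX_false : \sum_u pUX u false = 1 - \sum_u pUX u true.
  by rewrite -weight_sum1 /w big_split /= addrK.
rewrite /P /joint_out /out_dist big_bool /bern /= -pUX_false !mulr_suml -big_split /=.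
by apply: eq_bigr => u _; rewrite big_bool.
Qed.

Lemma row_xlnx u : \sum_y xlnx (P u y) = w u * xlnx_sum (out_terms W) (pUX u true / w u) + xlnx (w u).
Proof.
have o_ge0 y := out_dist_ge0 y hW (bern_dist (cond01 u)).
under eq_bigr do rewrite joint_out_cond xlnxM ?weight_ge0 ?o_ge0 //.
rewrite big_split /= -mulr_sumr -mulr_suml out_dist_sum1 ?mul1r ?xlnx_sum_out_terms //.
exact: bern_dist (cond01 u).
Qed.

Lemma mutual_info_bool_input : mutual_info P =
  \sum_u w u * xlnx_sum (out_terms W) (pUX u true / w u) -
  xlnx_sum (out_terms W) (\sum_u pUX u true).
Proof.
set col := fun y => \sum_u P u y.
have P_ge0 u y : 0 <= P u y by rewrite joint_out_cond mulr_ge0 ?weight_ge0 ?out_dist_ge0 //;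
  exact: bern_dist (cond01 u).
have term u y : (if P u y == 0 then 0 else P u y * ln (P u y / (w u * col y))) =
    xlnx (P u y) - P u y * ln (w u) - P u y * ln (col y).
  have [P0|P_neq0] := eqVneq (P u y) 0; first by rewrite P0 xlnx0 !mul0r !subrr.
  have P_gt0 : 0 < P u y by rewrite lt0r P_neq0 P_ge0.
  have w_gt0 : 0 < w u.
    by rewrite -joint_out_row (lt_le_trans P_gt0) // (ler_term_sum y (P_ge0 u)).
  have col_gt0 : 0 < col y by rewrite (lt_le_trans P_gt0) // (ler_term_sum u (P_ge0^~ y)).
  rewrite ln_div ?lnM ?posrE ?mulr_gt0 // /xlnx; ring.
transitivity (\sum_u \sum_y (xlnx (P u y) - P u y * ln (w u) - P u y * ln (col y))).
  rewrite /mutual_info /KL pair_bigA /=; apply: eq_bigr => -[u y] _ /=.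
  by rewrite joint_out_row -/(col y) term.
under eq_bigr do rewrite !sumrB -mulr_suml joint_out_row row_xlnx.
rewrite !sumrB big_split /= exchange_big /=.
under [X in _ - X]eq_bigr do rewrite -mulr_suml.
have -> : \sum_y (\sum_u P u y) * ln (col y) =
    \sum_y xlnx (out_dist W (bern (\sum_u pUX u true)) y).
  by apply: eq_bigr => y _; rewrite /col joint_out_col.
by rewrite xlnx_sum_out_terms /xlnx; ring.
Qed.
End Decomposition.

Lemma less_noisy_of_d2 (Y Y' : finType) (F : bool -> Y -> R) (G : bool -> Y' -> R) :
  is_channel F -> is_channel G ->
  (forall x, 0 < x < 1 -> xlnx_sum_d2 (out_terms G) x <= xlnx_sum_d2 (out_terms F) x) ->
  less_noisy F G.
Proof.
move=> hF hG d2_le U pUX hd.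
rewrite (mutual_info_bool_input hG hd) (mutual_info_bool_input hF hd).
have tangents := supporting_tangents_xlnx_sum_sub (nonneg01_out_terms hF)
  (nonneg01_out_terms hG) d2_le.
have := jensen_supporting_tangents tangents (weight_ge0 hd) (weight_sum1 hd) (cond01 hd).
have mean : \sum_u (pUX u false + pUX u true) * (pUX u true / (pUX u false + pUX u true)) =
    \sum_u pUX u true by apply: eq_bigr => u _; exact: weighted_cond.
under [X in _ <= X]eq_bigr do rewrite mulrBr.
rewrite mean sumrB; lra.
Qed.
End MutualInformation.

Section Curvature.
Variable R : realType.

(* [curvature (biso_eta W) (biso_rho W)] is Psi_W'' for a BISO channel [W]; the
   noiseless channel has [k = rho = 1]. *)
Definition curvature (k rho x : R) := k / (4^-1 - rho * (x - 2^-1) ^+ 2).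

Lemma curvature_denom_gt0 (rho x : R) : rho <= 1 -> 0 < x < 1 ->
  0 < 4^-1 - rho * (x - 2^-1) ^+ 2.
Proof.
move=> rho1 x01; have u_ge0 : 0 <= (x - 2^-1) ^+ 2 by exact: sqr_ge0.
have dx : 4^-1 - (x - 2^-1) ^+ 2 = x * (1 - x) by field.
have : 0 < x * (1 - x) by case/andP: x01 => x0 x1; rewrite mulr_gt0 // subr_gt0.
have : rho * (x - 2^-1) ^+ 2 <= (x - 2^-1) ^+ 2 by rewrite ler_piMl.
lra.
Qed.

Lemma curvature_le_rho (k r1 r2 x : R) : 0 <= k -> r1 <= r2 -> r2 <= 1 -> 0 < x < 1 ->
  curvature k r1 x <= curvature k r2 x.
Proof.
move=> k0 r12 r2_1 x01; have D2 := curvature_denom_gt0 r2_1 x01.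
have D1 := curvature_denom_gt0 (le_trans r12 r2_1) x01.
by rewrite ler_wpM2l // lef_pV2 ?posrE // lerB // ler_wpM2r // sqr_ge0.
Qed.
Lemma xlnx_sum_d2_noiseless (x : R) : 0 < x < 1 ->
  xlnx_sum_d2 (out_terms noiseless) x = curvature 1 1 x.
Proof.
case/andP=> x0 x1; rewrite xlnx_sum_d2_out_terms out_dist_noiseless big_bool.
rewrite /noiseless /bern /curvature /=.
have -> : 4^-1 - 1 * (x - 2^-1) ^+ 2 = x * (1 - x) :> R by field.
by field; rewrite !gt_eqF ?subr_gt0.
Qed.
End Curvature.

Section LogBounds.
Variable R : realType.

Lemma le_Nln1B (z : R) : z < 1 -> z <= - ln (1 - z).
Proof. by move=> z1; rewrite lerNr; apply: le_ln1Dx; rewrite ltrN2. Qed.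

Lemma Nln1B_le (z : R) : 0 <= z < 1 -> - ln (1 - z) <= z / (1 - z).
Proof.
case/andP=> z0 z1; have z1' : 0 < 1 - z by rewrite subr_gt0.
have -> : - ln (1 - z) = ln (1 + z / (1 - z)).
  by rewrite -lnV ?posrE //; congr ln; field; rewrite gt_eqF.
apply: le_ln1Dx; have : 0 <= z / (1 - z) by rewrite divr_ge0 // ltW.
lra.
Qed.

Lemma xlnx_pair (c d : R) : 0 < c / 2 - d -> 0 < c / 2 + d ->
  xlnx (c / 2) - c / 2 * ln (c / 2 + d) + (xlnx (c / 2) - c / 2 * ln (c / 2 - d)) =
  - (c / 2) * ln (1 - (2 * d / c) ^+ 2).
Proof.
move=> hm hp; have c0 : c != 0 by apply: lt0r_neq0; lra.
have -> : 1 - (2 * d / c) ^+ 2 = (c / 2 + d) * (c / 2 - d) / (c / 2 * (c / 2)) by field.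
have c2 : 0 < c / 2 by lra.
have ln_num : ln ((c / 2 + d) * (c / 2 - d)) = ln (c / 2 + d) + ln (c / 2 - d).
  by rewrite lnM ?posrE.
have ln_den : ln (c / 2 * (c / 2)) = ln (c / 2) + ln (c / 2) by rewrite lnM ?posrE.
rewrite ln_div ?posrE ?(mulr_gt0 hp hm) ?(mulr_gt0 c2 c2) //.
by rewrite ln_num ln_den /xlnx; ring.
Qed.

Lemma le_of_shrinking_factor (k E : R) : 0 <= k ->
  (forall t, 0 < t < 1 / 2 -> k * (1 - 4 * t ^+ 2) <= E) -> k <= E.
Proof.
move=> k0 bound; apply/ler_addgt0Pr => e e0.
set t := Num.min (1 / 4) (e / (k + 1)).
have t_le4 : t <= 1 / 4 by rewrite ge_min lexx.
have t_le : t <= e / (k + 1) by rewrite ge_min lexx orbT.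
have t0 : 0 < t by rewrite lt_min; apply/andP; split; [lra | rewrite divr_gt0 //; lra].
have kt : k * t <= e.
  apply: le_trans (ler_wpM2l k0 t_le) _.
  rewrite mulrA ler_pdivrMr ?ltr_wpDl // mulrC.
  by apply: ler_wpM2l; [exact: ltW | rewrite lerDl].
have t2 : 4 * t ^+ 2 <= t by rewrite expr2; nra.
have t01 : 0 < t < 1 / 2 by rewrite t0 /=; lra.
by have := bound t t01; nra.
Qed.
End LogBounds.

Section BISO3Channels.
Variable R : realType.

Definition yneg : 'I_3 := Ordinal (isT : 0 < 3)%N.
Definition yzero : 'I_3 := Ordinal (isT : 1 < 3)%N.
Definition ypos : 'I_3 := Ordinal (isT : 2 < 3)%N.

Lemma sum_I3 (f : 'I_3 -> R) : \sum_i f i = f yneg + f yzero + f ypos.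
Proof.
rewrite !big_ord_recl big_ord0 addr0 addrA.
by congr (_ + _ + _); congr f; apply: val_inj.
Qed.

Definition biso_gap (W : bool -> 'I_3 -> R) := W false ypos - W false yneg.
Definition biso_mass (W : bool -> 'I_3 -> R) := W false ypos + W false yneg.
Definition biso_eta (W : bool -> 'I_3 -> R) := biso_gap W ^+ 2 / biso_mass W.
Definition biso_rho (W : bool -> 'I_3 -> R) := biso_gap W ^+ 2 / biso_mass W ^+ 2.

Lemma KL_bern_half_bounds (t : R) : 0 < t < 1 / 2 ->
  0 < KL (bern (1 / 2)) (bern (1 / 2 + t)) <= 2 * t ^+ 2 / (1 - 4 * t ^+ 2).
Proof.
case/andP=> t0 t1; have z01 : 0 <= 4 * t ^+ 2 < 1 by rewrite mulr_ge0 ?sqr_ge0 //=; nra.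
have -> : KL (bern (1 / 2)) (bern (1 / 2 + t)) = - (1 / 2) * ln (1 - 4 * t ^+ 2).
  rewrite /KL big_bool /bern /= (_ : 1 - 1 / 2 = 1 / 2); last by field.
  rewrite (_ : 1 - (1 / 2 + t) = 1 / 2 - t); last by lra.
  rewrite !KL_summandE ?(xlnx_pair (c := 1)) ?mul1r; try lra.
  by rewrite divr1 (_ : (2 * t) ^+ 2 = 4 * t ^+ 2) //; ring.
have := le_Nln1B (proj2 (andP z01)); have := Nln1B_le z01.
have : 0 < t ^+ 2 by rewrite exprn_gt0.
have -> : 2 * t ^+ 2 / (1 - 4 * t ^+ 2) = 1 / 2 * (4 * t ^+ 2 / (1 - 4 * t ^+ 2)).
  by field; apply: lt0r_neq0; lra.
by move=> ? ? ?; apply/andP; split; nra.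
Qed.

Section Channel.
Variable W : bool -> 'I_3 -> R.
Hypothesis hW : BISO3 W.

Let m := biso_gap W.
Let c := biso_mass W.

Lemma biso_channel : is_channel W.
Proof. by case: hW. Qed.

Lemma biso_ge0 y : 0 <= W false y.
Proof. by case: (biso_channel false). Qed.

Lemma biso_slopes : [/\ W true yneg - W false yneg = m,
  W true yzero - W false yzero = 0 & W true ypos - W false ypos = - m].
Proof.
have W_true y : W true y = W false (rev_ord y) by case: hW => _ ->; rewrite rev_ordK.
rewrite !W_true.
have -> : rev_ord yneg = ypos by apply: val_inj.
have -> : rev_ord yzero = yzero by apply: val_inj.
have -> : rev_ord ypos = yneg by apply: val_inj.
by rewrite subrr /m /biso_gap opprB.
Qed.

Lemma out_dist_biso x :
  [/\ out_dist W (bern x) yneg = c / 2 + m * (x - 1 / 2),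
      out_dist W (bern x) yzero = W false yzero &
      out_dist W (bern x) ypos = c / 2 - m * (x - 1 / 2)].
Proof.
have [sn sz sp] := biso_slopes.
rewrite !out_dist_bern sn sz sp mul0r addr0 /m /c /biso_gap /biso_mass.
by split; field.
Qed.

Lemma biso_gap_bounds : - c <= m <= c.
Proof.
have := biso_ge0 ypos; have := biso_ge0 yneg.
by rewrite /m /c /biso_gap /biso_mass => ? ?; apply/andP; split; lra.
Qed.

Lemma biso_eta_ge0 : 0 <= biso_eta W.
Proof. by rewrite divr_ge0 ?sqr_ge0 ?addr_ge0 ?biso_ge0. Qed.

Lemma biso_rho_le1 : biso_rho W <= 1.
Proof.
rewrite /biso_rho -/m -/c; have /andP[mc cm] := biso_gap_bounds.
have [c0|c_neq0] := eqVneq c 0; first by rewrite c0 expr0n invr0 mulr0 ler01.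
by rewrite ler_pdivrMr ?exprn_even_gt0 // mul1r; nra.
Qed.

Lemma biso_out_gt0 x : 0 < c -> 0 < x < 1 ->
  0 < c / 2 + m * (x - 1 / 2) /\ 0 < c / 2 - m * (x - 1 / 2).
Proof.
move=> c0 /andP[x0 x1]; have /andP[mc cm] := biso_gap_bounds.
have : `|m * (x - 1 / 2)| < c / 2.
  have u_lt : `|x - 1 / 2| < 1 / 2 by rewrite ltr_norml; apply/andP; split; lra.
  rewrite normrM; apply: (le_lt_trans (y := c * `|x - 1 / 2|)).
    by rewrite ler_wpM2r // ler_norml mc cm.
  have : c * `|x - 1 / 2| < c * (1 / 2) by rewrite ltr_pM2l.
  lra.
by rewrite ltr_norml => /andP[? ?]; split; lra.
Qed.

Lemma xlnx_sum_d2_biso x : 0 < x < 1 ->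
  xlnx_sum_d2 (out_terms W) x = curvature (biso_eta W) (biso_rho W) x.
Proof.
move=> x01; have [sn sz sp] := biso_slopes; have [on oz op] := out_dist_biso x.
rewrite xlnx_sum_d2_out_terms sum_I3 sn sz sp on oz op expr0n mul0r addr0 sqrrN.
rewrite /curvature /biso_eta /biso_rho -/m -/c.
have [c0|c_neq0] := eqVneq c 0.
  have m0 : m = 0 by have := biso_gap_bounds; rewrite c0 oppr0 -eq_le => /eqP.
  by rewrite m0 expr0n /= !mul0r addr0.
have c_gt0 : 0 < c by rewrite lt0r c_neq0 /c addr_ge0 ?biso_ge0.
have [hp hm] := biso_out_gt0 c_gt0 x01.
have -> : 4^-1 - m ^+ 2 / c ^+ 2 * (x - 2^-1) ^+ 2 =
    (c / 2 + m * (x - 1 / 2)) * (c / 2 - m * (x - 1 / 2)) / c ^+ 2 by field.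
by field; rewrite c_neq0 /=; apply/andP; split; apply: lt0r_neq0; lra.
Qed.

Lemma biso_KL_contraction : KL_contraction_bound W (biso_eta W).
Proof.
apply: KL_contraction_bound_of_d2 biso_channel _ => x x01.
rewrite xlnx_sum_d2_biso // xlnx_sum_d2_noiseless // [X in _ <= _ * X]/curvature mul1r.
exact: curvature_le_rho biso_eta_ge0 biso_rho_le1 (lexx 1) x01.
Qed.

Lemma KL_out_half_ge t : 0 < t < 1 / 2 ->
  2 * biso_eta W * t ^+ 2 <= KL (out_dist W (bern (1 / 2))) (out_dist W (bern (1 / 2 + t))).
Proof.
move=> t01; have /andP[t0 t1] := t01.
have [n0 z0 p0] := out_dist_biso (1 / 2); have [nt zt pt] := out_dist_biso (1 / 2 + t).
have ht : 1 / 2 + t - 1 / 2 = t by ring.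
rewrite /KL sum_I3 n0 z0 p0 nt zt pt subrr ht.
rewrite mulr0 addr0 subr0 KL_summand_same addr0 /biso_eta -/m -/c.
have [m0|m_neq0] := eqVneq m 0.
  by rewrite m0 mul0r addr0 subr0 !KL_summand_same expr0n !mul0r mulr0 mul0r addr0.
have c_gt0 : 0 < c.
  have /andP[mc cm] := biso_gap_bounds.
  by apply: (contraNT _ m_neq0); rewrite -leNgt => c_le0; apply/eqP; lra.
have t01' : 0 < 1 / 2 + t < 1 by apply/andP; split; lra.
have [hp hm] := biso_out_gt0 c_gt0 t01'; rewrite ht in hp hm.
rewrite !KL_summandE ?(xlnx_pair hm hp); try lra.
have z1 : (2 * (m * t) / c) ^+ 2 < 1.
  have : 0 < (c - 2 * (m * t)) * (c + 2 * (m * t)) by rewrite mulr_gt0 //; lra.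
  by rewrite expr_div_n ltr_pdivrMr ?exprn_gt0 // mul1r; nra.
have -> : 2 * (m ^+ 2 / c) * t ^+ 2 = c / 2 * (2 * (m * t) / c) ^+ 2.
  by field; rewrite gt_eqF.
by rewrite mulNr -mulrN; apply: ler_wpM2l; [rewrite divr_ge0 ?ltW | exact: le_Nln1B].
Qed.

Lemma eta_KL_biso : eta_KL W = biso_eta W.
Proof.
apply/eqP; rewrite eq_le (eta_KL_le biso_eta_ge0 biso_KL_contraction) /=.
apply: le_of_shrinking_factor biso_eta_ge0 _ => t t01.
have /andP[t0 t1] := t01; have /andP[KL_gt0 KL_le] := KL_bern_half_bounds t01.
have half01 : 0 <= (1 / 2 : R) <= 1 by apply/andP; split; lra.
have half_t01 : 0 <= 1 / 2 + t <= 1 by apply/andP; split; lra.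
have supp : abs_cont (bern (1 / 2)) (bern (1 / 2 + t)) by move=> [] /=; lra.
apply: le_trans (KL_ratio_le_eta_KL biso_KL_contraction
  (bern_dist half01) (bern_dist half_t01) supp KL_gt0).
have denom : 0 < 1 - 4 * t ^+ 2 by nra.
rewrite ler_pdivlMr //; apply: le_trans (KL_out_half_ge t01).
have -> : 2 * biso_eta W * t ^+ 2 =
    biso_eta W * (1 - 4 * t ^+ 2) * (2 * t ^+ 2 / (1 - 4 * t ^+ 2)).
  by field; rewrite gt_eqF.
by rewrite ler_wpM2l // mulr_ge0 ?biso_eta_ge0 ?ltW.
Qed.
End Channel.
End BISO3Channels.

Theorem mainTheorem3 (R : realType) (F G : bool -> 'I_3 -> R) :
  BISO3 F -> BISO3 G -> eta_KL F = eta_KL G ->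
  less_noisy F G \/ less_noisy G F.
Proof.
move=> hF hG; rewrite (eta_KL_biso hF) (eta_KL_biso hG) => eta_eq.
have [rho_le|rho_lt] := lerP (biso_rho G) (biso_rho F).
- left; apply: less_noisy_of_d2 (biso_channel hF) (biso_channel hG) _ => x x01.
  rewrite !xlnx_sum_d2_biso // eta_eq.
  exact: curvature_le_rho (biso_eta_ge0 hG) rho_le (biso_rho_le1 hF) x01.
- right; apply: less_noisy_of_d2 (biso_channel hG) (biso_channel hF) _ => x x01.
  rewrite !xlnx_sum_d2_biso // -eta_eq.
  exact: curvature_le_rho (biso_eta_ge0 hF) (ltW rho_lt) (biso_rho_le1 hG) x01.
Qed.
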